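(* Let $G=(U,V,E)$ be a signed bipartite graph, let $p\ge 2$ and $q\ge 1$ be integers, and let $B$ be a balanced $(p,q)$-biclique of $G$ with vertex sides $L$ and $R$, where $L$ lies in one partition of $G$, $R$ lies in the other, $|L|=p$ and $|R|=q$. Write the vertices of $L$ in decreasing order of priority as $u,w_1,\dots,w_{p-1}$, i.e. $\rho(u)>\rho(w_1)>\cdots>\rho(w_{p-1})$. For each $v\in R$ consider the signed $p$-wedge $\omega_v=\langle u,w_1,\dots,w_{p-1},v\rangle$. Then all the signed $p$-wedges $\omega_v$, $v\in R$, are of the same type.
   Context: A signed bipartite graph $G=(U,V,E)$ has disjoint vertex sets $U,V$, edge set $E\subseteq U\times V$, and each edge carries a sign $+$ or $-$. A biclique is a complete bipartite subgraph; a $(p,q)$-biclique is a biclique with $p$ vertices on one side and $q$ on the other. A butterfly in a biclique is the 4-cycle induced by two vertices $a,a'$ from one side and two vertices $b,b'$ from the other side; it is balanced if it contains an even number of negative edges. A $(p,q)$-biclique is balanced if every butterfly contained in it is balanced. Vertex priority: for vertices $a,b$, $\rho(a)>\rho(b)$ iff $\deg(a)>\deg(b)$, or $\deg(a)=\deg(b)$ and $\mathrm{id}(a)>\mathrm{id}(b)$, where $\mathrm{id}$ is a fixed injective vertex numbering. A signed $p$-wedge is a tuple $\langle u,w_1,\dots,w_{p-1},v\rangle$ where $u,w_1,\dots,w_{p-1}$ are distinct vertices of the same partition with $\rho(u)>\rho(w_1)>\cdots>\rho(w_{p-1})$, $v$ is in the opposite partition, and $v$ is adjacent to each of $u,w_1,\dots,w_{p-1}$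 (with the signs of these $p$ edges). Its type is the word $\kappa=c_1c_2\cdots c_{p-1}$ over $\{s,d\}$, where $c_i=s$ if the sign of edge $(u,v)$ equals the sign of edge $(v,w_i)$, and $c_i=d$ otherwise. *)

From mathcomp Require Import all_boot.
Set Implicit Arguments. Unset Strict Implicit. Unset Printing Implicit Defensive.

(* A signed bipartite graph on a finite vertex type T.
   [side x] tells which partition (U = true, V = false) x belongs to;
   [adj] is the (symmetric) edge relation, edges only join opposite sides;
   [sgn x y] is the sign of edge (x,y): true = '+', false = '-'.
   [vid] is the fixed injective vertex numbering. *)
Record signed_bigraph (T : finType) := SignedBigraph {
  side : T -> bool;
  adj : rel T;
  sgn : T -> T -> bool;
  vid : T -> nat;
  adj_sym : forall x y, adj x y = adj y x;
  adj_bip : forall x y, adj x y -> side x != side y;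
  sgn_sym : forall x y, sgn x y = sgn y x;
  vid_inj : injective vid
}.

Section Defs.
Variables (T : finType) (G : signed_bigraph T).

Definition deg (x : T) : nat := #|[set y | adj G x y]|.

Definition prio_gt (a b : T) : bool :=
  (deg b < deg a) || ((deg a == deg b) && (vid G b < vid G a)).

Definition neg (x y : T) : nat := ~~ sgn G x y.

Definition is_biclique (p q : nat) (L R : {set T}) : Prop :=
  [/\ (exists b, (forall x, x \in L -> side G x = b) /\
                 (forall y, y \in R -> side G y = ~~ b)),
      #|L| = p, #|R| = q &
      forall x y, x \in L -> y \in R -> adj G x y].

Definition balanced_biclique (L R : {set T}) : Prop :=
  forall a a' b b', a \in L -> a' \in L -> b \in R -> b' \in R ->
    a != a' -> b != b' ->
    ~~ odd (neg a b + neg a b' + neg a' b + neg a' b').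

(* type of the signed wedge <u, w_1, ..., w_{p-1}, v>: c_i = s iff
   sign(u,v) = sign(v,w_i); encoded as true for s and false for d *)
Definition wedge_type (u : T) (w : seq T) (v : T) : seq bool :=
  [seq sgn G u v == sgn G v x | x <- w].

Definition is_signed_wedge (p : nat) (u : T) (w : seq T) (v : T) : Prop :=
  [/\ size w = p.-1, uniq (u :: w), sorted prio_gt (u :: w),
      all (fun x => side G x == side G u) w &
      (side G v != side G u) && all (adj G v) (u :: w)].
End Defs.

From mathcomp Require Import all_boot.

Set Implicit Arguments.
Unset Strict Implicit.
Unset Printing Implicit Defensive.

(* A butterfly has an even number of negative edges exactly when the two
   wedges through its opposite vertices b, b' see the same sign pattern, so
   balance makes the type of <u, ..., v> independent of v in R.  The
   remaining wedge conditions come from the biclique structure, and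
   distinctness of u, w_1, ..., w_{p-1} from the strict priority order. *)

Section SignedBiclique.
Variables (T : finType) (G : signed_bigraph T).

Lemma prio_gt_trans : transitive (prio_gt G).
Proof.
move=> b a c; rewrite /prio_gt.
case/orP=> [h1|/andP[/eqP e1 h1]]; case/orP=> [h2|/andP[/eqP e2 h2]].
- by rewrite (ltn_trans h2 h1).
- by rewrite -e2 h1.
- by rewrite e1 h2.
- by rewrite e1 e2 eqxx (ltn_trans h2 h1) orbT.
Qed.

Lemma prio_gt_irr : irreflexive (prio_gt G).
Proof. by move=> x; rewrite /prio_gt ltnn eqxx ltnn. Qed.

Lemma sorted_prio_gt_uniq (s : seq T) : sorted (prio_gt G) s -> uniq s.
Proof. exact: (sorted_uniq prio_gt_trans prio_gt_irr). Qed.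

Lemma even_butterfly_sgn (a a' b b' : T) :
  ~~ odd (neg G a b + neg G a b' + neg G a' b + neg G a' b') ->
  (sgn G a b == sgn G b a') = (sgn G a b' == sgn G b' a').
Proof.
rewrite /neg (sgn_sym G b a') (sgn_sym G b' a').
by case: (sgn G a b); case: (sgn G a b'); case: (sgn G a' b); case: (sgn G a' b').
Qed.

Lemma balanced_wedge_type (L R : {set T}) (u : T) (w : seq T) (v v' : T) :
  balanced_biclique G L R -> u \in L -> {subset w <= L} -> u \notin w ->
  v \in R -> v' \in R -> wedge_type G u w v = wedge_type G u w v'.
Proof.
move=> hbal uL wL uw vR v'R; have [-> // | nvv'] := eqVneq v v'.
apply/eq_in_map => x xw; apply: even_butterfly_sgn.
by apply: hbal => //; [exact: wL | apply: contraNneq uw => ->].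
Qed.

Lemma biclique_signed_wedge (p q : nat) (L R : {set T}) (u : T) (w : seq T)
    (v : T) :
  is_biclique G p q L R -> L = [set x in u :: w] ->
  sorted (prio_gt G) (u :: w) -> v \in R -> is_signed_wedge G p u w v.
Proof.
case=> [[b [sideL _]] cardL _ adjLR] defL ord vR.
have uniq_uw := sorted_prio_gt_uniq ord.
have uwL x : x \in u :: w -> x \in L by move=> xuw; rewrite defL inE.
have uL : u \in L by apply: uwL; exact: mem_head.
split=> //.
- by rewrite -cardL defL cardsE (card_uniqP uniq_uw).
- apply/allP=> x xw; rewrite (sideL x) ?(sideL u) //.
  by rewrite uwL // inE xw orbT.
- apply/andP; split; first by rewrite eq_sym adj_bip ?adjLR.
  by apply/allP=> x /uwL xL; rewrite adj_sym adjLR.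
Qed.

End SignedBiclique.

Theorem lemma1 (T : finType) (G : signed_bigraph T) (p q : nat)
  (hp : 2 <= p) (hq : 1 <= q) (L R : {set T})
  (hB : is_biclique G p q L R) (hbal : balanced_biclique G L R)
  (u : T) (w : seq T)
  (hL : L = [set x in u :: w])
  (hord : sorted (prio_gt G) (u :: w)) :
  (forall v, v \in R -> is_signed_wedge G p u w v) /\
  (forall v v', v \in R -> v' \in R ->
    wedge_type G u w v = wedge_type G u w v').
Proof.
split=> [v vR | v v' vR v'R]; first exact: biclique_signed_wedge hB hL hord vR.
have /andP[uw _] := sorted_prio_gt_uniq hord.
apply: balanced_wedge_type hbal _ _ uw vR v'R; first by rewrite hL !inE eqxx.
by move=> x xw; rewrite hL !inE xw orbT.
Qed.
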